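(* Let $\phi$ be an even function in $\mathcal{S}$ with $\int_{-\infty}^\infty\phi(x)\,dx=1$. For $k\in\mathbb{N}$ and $c\in\mathbb{R}$ define $\phi_{k,c}(x)=k\phi(k(x-c))$. Then for every $f\in SG(\mathbb{R})$ and every $c\in\mathbb{R}$, $$f(c)=\lim_{k\to\infty}\int_{-\infty}^\infty f(x)\phi_{k,c}(x)\,dx.$$
   Context: A function $f:\mathbb{R}\to\mathbb{C}$ is piecewise continuous if on each bounded subinterval it is continuous except at finitely many points, at which it has finite one-sided limits. $PC_{bj}$ is the set of piecewise continuous $f:\mathbb{R}\to\mathbb{C}$ satisfying $f(x)=\tfrac12\big(f(x+)+f(x-)\big)$ for every $x$. $SG(\mathbb{R})$ is the set of $f\in PC_{bj}$ for which there exist $C>0$, $N\in\mathbb{N}$ with $\int_{-R}^{R}|f|\le C(1+R)^N$ for all $R>0$. $\mathcal{S}$ is the set of infinitely differentiable $\phi:\mathbb{R}\to\mathbb{C}$ with $\lim_{x\to\pm\infty}x^m\phi^{(n)}(x)=0$ for all integers $m,n\ge0$. *)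

From Stdlib Require Import Reals List.
From Coquelicot Require Import Coquelicot.
Open Scope R_scope.

Definition piecewise_continuous (f : R -> C) : Prop :=
  forall a b : R, exists l : list R,
    (forall x, a <= x <= b -> ~ In x l -> continuous f x) /\
    (forall x, In x l ->
       (exists Lm : C, filterlim f (at_left x) (locally Lm)) /\
       (exists Lp : C, filterlim f (at_right x) (locally Lp))).

Definition PC_bj (f : R -> C) : Prop :=
  piecewise_continuous f /\
  forall x : R, exists Lp Lm : C,
    filterlim f (at_right x) (locally Lp) /\
    filterlim f (at_left x) (locally Lm) /\
    f x = Cmult (Cplus Lp Lm) (RtoC (/ 2)).

Definition SG (f : R -> C) : Prop :=
  PC_bj f /\
  exists (Cst : R) (N : nat), 0 < Cst /\
    forall r : R, 0 < r -> RInt (fun x => Cmod (f x)) (- r) r <= Cst * (1 + r) ^ N.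

Definition Schwartz (phi : R -> C) : Prop :=
  exists D : nat -> R -> C,
    D 0%nat = phi /\
    (forall n x, is_derive (D n) x (D (S n) x)) /\
    (forall m n : nat,
       filterlim (fun x => Cmult (RtoC (x ^ m)) (D n x)) (Rbar_locally p_infty) (locally (RtoC 0)) /\
       filterlim (fun x => Cmult (RtoC (x ^ m)) (D n x)) (Rbar_locally m_infty) (locally (RtoC 0))).

Definition phi_kc (phi : R -> C) (k : nat) (c : R) : R -> C :=
  fun x => Cmult (RtoC (INR k)) (phi (INR k * (x - c))).

From Stdlib Require Import Reals List Lra Lia ZArith.
From Coquelicot Require Import Coquelicot.
Open Scope R_scope.

(* Since [phi] is even with integral 1, each [phi_kc phi k c] has mass 1/2 on either side of
   [c].  With [Lp], [Lm] the one-sided limits of [f] at [c], whose mean is [f c], the error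
   [∫ f phi_kc - f c] therefore reduces to [∫_{x>c} (f - Lp) phi_kc] and [∫_{x<c} (f - Lm) phi_kc].
   Where [|x - c| < delta] the factor [f - L] is small, and [phi_kc] is dominated by a Lorentzian
   [k / (1 + k^2 (x - c)^2)] of mass at most [PI]; where [|x - c| >= delta], the rapid decay of
   [phi] gives [|phi_kc x| <= C_delta / k * (1 + x^2)^-(N+3)], and the polynomial growth of
   [∫_{-r}^{r} |f|] makes [|f| (1 + x^2)^-(N+3)] integrable (bound it on the unit shells
   [n <= |x| <= n + 1] and telescope).  The same domination gives the existence of the improper
   integrals, via the Cauchy criterion. *)

(** * Piecewise continuous functions *)

(* Compared with [piecewise_continuous], one-sided limits are required at every point (as
   [PC_bj] provides), so that no bookkeeping of the exceptional points is needed when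
   combining functions or restricting to subintervals. *)
Definition pw_continuous {V : UniformSpace} (g : R -> V) : Prop :=
  (forall a b : R, exists l : list R,
     forall x, a <= x <= b -> ~ In x l -> continuous g x) /\
  (forall x, (exists L, filterlim g (at_right x) (locally L)) /\
             (exists L, filterlim g (at_left x) (locally L))).

Lemma pw_continuous_of_continuous {V : UniformSpace} (h : R -> V) :
  (forall x, continuous h x) -> pw_continuous h.
Proof.
  intros Hh. split.
  - intros a b. exists nil. auto.
  - intros x. split; exists (h x);
      apply (filterlim_filter_le_1 _ (filter_le_within (F:=locally x) _)), Hh.
Qed.

Lemma pw_continuous_comp2 {U V W : UniformSpace} (g : R -> U) (h : R -> V) (F : U -> V -> W) :
  pw_continuous g -> pw_continuous h ->
  (forall u v, filterlim (fun p : U * V => F (fst p) (snd p))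
      (filter_prod (locally u) (locally v)) (locally (F u v))) ->
  pw_continuous (fun x => F (g x) (h x)).
Proof.
  intros [Hg Hglim] [Hh Hhlim] HF. split.
  - intros a b. destruct (Hg a b) as [l Hl], (Hh a b) as [l' Hl'].
    exists (l ++ l'). intros x Hx Hn.
    apply (filterlim_comp_2 (G:=locally (g x)) (H:=locally (h x)) g h F); [| |apply HF].
    + apply Hl; [exact Hx|]. intros Hi. apply Hn, in_or_app; auto.
    + apply Hl'; [exact Hx|]. intros Hi. apply Hn, in_or_app; auto.
  - intros x. destruct (Hglim x) as [[L1 H1] [L2 H2]], (Hhlim x) as [[M1 K1] [M2 K2]].
    split; eexists; eapply filterlim_comp_2; eauto.
Qed.

Lemma pw_continuous_comp {U V : UniformSpace} (g : R -> U) (F : U -> V) :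
  pw_continuous g -> (forall u, continuous F u) -> pw_continuous (fun x => F (g x)).
Proof.
  intros Hg HF. apply (pw_continuous_comp2 g g (fun u _ => F u) Hg Hg).
  intros u v. eapply filterlim_comp; [apply filterlim_fst|apply HF].
Qed.

Lemma ex_RInt_continuous_open {V : CompleteNormedModule R_AbsRing} (g : R -> V) a b La Lb :
  a < b -> (forall x, a < x < b -> continuous g x) ->
  filterlim g (at_right a) (locally La) -> filterlim g (at_left b) (locally Lb) ->
  ex_RInt g a b.
Proof.
  intros Hab Hc Ha Hb.
  destruct (C0_extension_lt g La Lb a b Hab Hc Ha Hb) as [h [Hh [Heq _]]].
  apply ex_RInt_ext with h.
  - rewrite Rmin_left, Rmax_right by lra. intros x Hx. apply Heq, Hx.
  - apply ex_RInt_continuous. intros z _. apply Hh.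
Qed.

Lemma ex_RInt_continuous_off {V : CompleteNormedModule R_AbsRing} (g : R -> V) (l : list R) :
  (forall x, (exists L, filterlim g (at_right x) (locally L)) /\
             (exists L, filterlim g (at_left x) (locally L))) ->
  forall a b, a < b -> (forall x, a < x < b -> ~ In x l -> continuous g x) -> ex_RInt g a b.
Proof.
  intros Hlim. induction l as [|p l IH]; intros a b Hab Hc.
  - destruct (Hlim a) as [[La HLa] _], (Hlim b) as [_ [Lb HLb]].
    apply (ex_RInt_continuous_open g a b La Lb Hab); auto.
  - assert (Hc' : forall a' b', a <= a' -> b' <= b -> ~ (a' < p < b') ->
              forall x, a' < x < b' -> ~ In x l -> continuous g x).
    { intros a' b' Ha' Hb' Hp x Hx Hn. apply Hc; [lra|]. intros [E|E]; [subst; lra|tauto]. }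
    destruct (Rlt_dec a p) as [Hap|Hap]; [destruct (Rlt_dec p b) as [Hpb|Hpb]|].
    + apply ex_RInt_Chasles with p; apply IH; try apply Hc'; lra.
    + apply IH, Hc'; lra.
    + apply IH, Hc'; lra.
Qed.

Lemma pw_continuous_ex_RInt {V : CompleteNormedModule R_AbsRing} (g : R -> V) :
  pw_continuous g -> forall a b, ex_RInt g a b.
Proof.
  intros [Hg Hlim].
  assert (Hlt : forall a b, a < b -> ex_RInt g a b).
  { intros a b Hab. destruct (Hg a b) as [l Hl].
    apply (ex_RInt_continuous_off g l Hlim a b Hab). intros x Hx. apply Hl. lra. }
  intros a b. destruct (Rtotal_order a b) as [H|[<-|H]].
  - apply Hlt, H.
  - apply ex_RInt_point.
  - apply ex_RInt_swap, Hlt, H.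
Qed.

Lemma PC_bj_pw_continuous (f : R -> C) : PC_bj f -> pw_continuous f.
Proof.
  intros [Hpc Hmid]. split.
  - intros a b. destruct (Hpc a b) as [l [Hl _]]. exists l. exact Hl.
  - intros x. destruct (Hmid x) as [Lp [Lm [H1 [H2 _]]]]. split; eauto.
Qed.

(** * Complex-valued integrals *)

(* [C] is a normed module over both [R] and [C]; integrals are taken over [R]. *)
Notation RIntC g a b := (@RInt C_R_CompleteNormedModule g a b).

Lemma norm_C_R (z : C) : @norm _ C_R_NormedModule z = Cmod z.
Proof.
  change (sqrt (Rabs (fst z) ^ 2 + Rabs (snd z) ^ 2) = Cmod z).
  unfold Cmod. rewrite !pow2_abs. reflexivity.
Qed.

(* [C] carries the product uniform structure, whereas [filterlim_mult] for [C_AbsRing] is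
   stated for [Cmod]-balls; both give the same neighbourhoods. *)
Lemma locally_C_Cmod (x : C) (P : C -> Prop) :
  @locally (AbsRing_UniformSpace C_AbsRing) x P <-> locally x P.
Proof.
  split; intros [eps H].
  - assert (He : 0 < eps / 2) by (destruct eps; simpl; lra).
    exists (mkposreal _ He). intros y Hy. apply H.
    apply C_NormedModule_mixin_compat2 in Hy. simpl in Hy.
    assert (Hs : sqrt 2 < sqrt (2 * 2)) by (apply sqrt_lt_1; lra).
    rewrite sqrt_square in Hs by lra.
    pose proof (cond_pos eps). eapply Rlt_le_trans; [exact Hy|nra].
  - exists eps. intros y Hy. apply H, C_NormedModule_mixin_compat1, Hy.
Qed.

Lemma filterlim_Cmult (u v : C) :
  filterlim (fun p : C * C => Cmult (fst p) (snd p))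
    (filter_prod (locally u) (locally v)) (locally (Cmult u v)).
Proof.
  intros P HP. apply locally_C_Cmod in HP.
  destruct (filterlim_mult (K:=C_AbsRing) u v P HP) as [Q R HQ HR HQR].
  exists Q R; [apply locally_C_Cmod, HQ|apply locally_C_Cmod, HR|exact HQR].
Qed.

Lemma continuous_Cmod (u : C) : continuous Cmod u.
Proof. exact (filterlim_norm (V:=C_NormedModule) u). Qed.

Lemma continuous_Rplus_r (s x : R) : continuous (fun y => y + s) x.
Proof. apply (ex_derive_continuous (V:=R_NormedModule)). auto_derive. exact I. Qed.

Lemma filterlim_Rmult (u v : R) :
  filterlim (fun p : R * R => fst p * snd p)
    (filter_prod (locally u) (locally v)) (locally (u * v)).
Proof. exact (filterlim_mult (K:=R_AbsRing) u v). Qed.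

Lemma filterlim_Cmod_lt {T} (F : (T -> Prop) -> Prop) {FF : Filter F} (g : T -> C) (l : C) :
  filterlim g F (locally l) -> forall eps : posreal, F (fun t => Cmod (Cminus (g t) l) < eps).
Proof. intros H. exact (proj1 (filterlim_locally_ball_norm (U:=C_NormedModule) g l) H). Qed.

Lemma filterlim_of_Cmod_lt {T} (F : (T -> Prop) -> Prop) {FF : Filter F} (g : T -> C) (l : C) :
  (forall eps : posreal, F (fun t => Cmod (Cminus (g t) l) < eps)) -> filterlim g F (locally l).
Proof. intros H. exact (proj2 (filterlim_locally_ball_norm (U:=C_NormedModule) g l) H). Qed.

Lemma Cmod_RInt_le (g : R -> C) (h : R -> R) u v :
  u <= v -> ex_RInt g u v -> ex_RInt h u v ->
  (forall x, u < x < v -> Cmod (g x) <= h x) -> Cmod (RIntC g u v) <= RInt h u v.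
Proof.
  intros Huv Hg Hh Hb.
  set (inside := fun x => if Rlt_dec u x then if Rlt_dec x v then true else false else false).
  set (g' := fun x => if inside x then g x else RtoC 0).
  set (h' := fun x => if inside x then h x else 0).
  assert (Hin : forall x, Rmin u v < x < Rmax u v -> inside x = true).
  { rewrite Rmin_left, Rmax_right by lra. intros x Hx. unfold inside.
    destruct (Rlt_dec u x); [destruct (Rlt_dec x v)|]; auto; lra. }
  assert (Eg : forall x, Rmin u v < x < Rmax u v -> g x = g' x).
  { intros x Hx. unfold g'. rewrite Hin; auto. }
  assert (Eh : forall x, Rmin u v < x < Rmax u v -> h x = h' x).
  { intros x Hx. unfold h'. rewrite Hin; auto. }
  rewrite (RInt_ext (V:=C_R_CompleteNormedModule) _ _ _ _ Eg),
    (RInt_ext (V:=R_CompleteNormedModule) _ _ _ _ Eh), <- norm_C_R.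
  apply (norm_RInt_le g' h' u v _ _ Huv).
  - intros x _. rewrite norm_C_R. unfold g', h', inside.
    destruct (Rlt_dec u x); [destruct (Rlt_dec x v)|]; try (rewrite Cmod_0; lra).
    apply Hb; lra.
  - apply (RInt_correct (V:=C_R_CompleteNormedModule)). apply (ex_RInt_ext g); auto.
  - apply (RInt_correct (V:=R_CompleteNormedModule)). apply (ex_RInt_ext h); auto.
Qed.

Lemma is_RInt_Cmult_l (g : R -> C) (L : C) a b l :
  is_RInt g a b l -> is_RInt (fun x => Cmult L (g x)) a b (Cmult L l).
Proof.
  intros H. destruct L as [p q].
  apply (is_RInt_fct_extend_fst (U:=R_NormedModule) (V:=R_NormedModule)) in H as H1.
  apply (is_RInt_fct_extend_snd (U:=R_NormedModule) (V:=R_NormedModule)) in H as H2.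
  apply (is_RInt_fct_extend_pair (U:=R_NormedModule) (V:=R_NormedModule)).
  - eapply is_RInt_ext;
      [|apply (is_RInt_minus (V:=R_NormedModule)); apply (is_RInt_scal (V:=R_NormedModule));
        [exact H1|exact H2]].
    intros x _. simpl. unfold minus, plus, opp, scal; simpl. unfold mult; simpl. ring.
  - eapply is_RInt_ext;
      [|apply (is_RInt_plus (V:=R_NormedModule)); apply (is_RInt_scal (V:=R_NormedModule));
        [exact H2|exact H1]].
    intros x _. simpl. unfold plus, scal; simpl. unfold mult; simpl. ring.
Qed.

Lemma is_RInt_Cmult_sub (g h : R -> C) (L : C) u v :
  ex_RInt (fun x => Cmult (g x) (h x)) u v -> ex_RInt h u v ->
  is_RInt (fun x => Cmult (Cminus (g x) L) (h x)) u v
    (Cminus (RIntC (fun x => Cmult (g x) (h x)) u v) (Cmult L (RIntC h u v))).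
Proof.
  intros Hgh Hh.
  eapply is_RInt_ext;
    [|apply (is_RInt_minus (V:=C_R_NormedModule));
      [apply (RInt_correct (V:=C_R_CompleteNormedModule)), Hgh
      |apply is_RInt_Cmult_l, (RInt_correct (V:=C_R_CompleteNormedModule)), Hh]].
  intros x _. change (Cminus (Cmult (g x) (h x)) (Cmult L (h x)) = Cmult (Cminus (g x) L) (h x)).
  ring.
Qed.

Lemma Cmod_RInt_gen_sub_le (g : R -> C) (l y : C) (M : R) :
  is_RInt_gen g (Rbar_locally m_infty) (Rbar_locally p_infty) l ->
  (exists a0 b0, forall a b, a <= a0 -> b0 <= b -> Cmod (Cminus (RIntC g a b) y) <= M) ->
  Cmod (Cminus l y) <= M.
Proof.
  intros Hl [a0 [b0 Hab]]. apply le_epsilon. intros eps He.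
  destruct (Hl _ (locally_ball_norm (V:=C_NormedModule) l (mkposreal eps He)))
    as [Q R [m1 HQ] [m2 HR] HQR].
  set (a := Rmin a0 (m1 - 1)). set (b := Rmax b0 (m2 + 1)).
  destruct (HQR a b) as [z [Hz Hball]].
  { apply HQ. unfold a. pose proof (Rmin_r a0 (m1 - 1)). lra. }
  { apply HR. unfold b. pose proof (Rmax_r b0 (m2 + 1)). lra. }
  apply (is_RInt_unique (V:=C_R_CompleteNormedModule)) in Hz. simpl in Hz.
  assert (Hy : Cmod (Cminus z y) <= M).
  { rewrite <- Hz. apply Hab; [apply Rmin_l|apply Rmax_l]. }
  change (Cmod (Cminus z l) < eps) in Hball.
  replace (Cminus l y) with (Cplus (Cminus z y) (Copp (Cminus z l))) by ring.
  eapply Rle_trans; [apply Cmod_triangle|]. rewrite Cmod_opp. lra.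
Qed.

Definition tails_vanish (h : R -> R) : Prop :=
  forall eps, 0 < eps -> exists T, forall u v, u <= v -> (T <= u \/ v <= - T) -> RInt h u v <= eps.

Lemma Cmod_RInt_tail_le (g : R -> C) (h : R -> R) :
  (forall a b, ex_RInt g a b) -> (forall a b, ex_RInt h a b) ->
  (forall x, Cmod (g x) <= h x) -> tails_vanish h ->
  forall eps, 0 < eps -> exists T, forall u v, (T <= Rmin u v \/ Rmax u v <= - T) ->
    Cmod (RIntC g u v) <= eps.
Proof.
  intros Hg Hh Hb Htail eps He. destruct (Htail eps He) as [T HT]. exists T. intros u v Huv.
  destruct (Rle_dec u v) as [Hle|Hlt].
  - rewrite Rmin_left, Rmax_right in Huv by lra.
    eapply Rle_trans; [apply Cmod_RInt_le; auto|apply HT; auto].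
  - rewrite Rmin_right, Rmax_left in Huv by lra.
    rewrite <- (opp_RInt_swap (V:=C_R_CompleteNormedModule)) by auto.
    change (Cmod (Copp (RIntC g v u)) <= eps). rewrite Cmod_opp.
    eapply Rle_trans; [apply Cmod_RInt_le; auto; lra|apply HT; auto; lra].
Qed.

Lemma ex_RInt_gen_dominated (g : R -> C) (h : R -> R) :
  (forall a b, ex_RInt g a b) -> (forall a b, ex_RInt h a b) ->
  (forall x, Cmod (g x) <= h x) -> tails_vanish h ->
  exists l, is_RInt_gen g (Rbar_locally m_infty) (Rbar_locally p_infty) l.
Proof.
  intros Hg Hh Hb Htail.
  assert (Hcauchy : forall eps : posreal, exists P,
            filter_prod (Rbar_locally m_infty) (Rbar_locally p_infty) P /\
            forall u v : R * R, P u -> P v ->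
              ball (RIntC g (fst u) (snd u)) eps (RIntC g (fst v) (snd v))).
  { intros eps. destruct (Cmod_RInt_tail_le g h Hg Hh Hb Htail (eps / 3)) as [T HT];
      [destruct eps; simpl; lra|].
    exists (fun ab : R * R => fst ab < - Rabs T /\ Rabs T < snd ab). split.
    - exists (fun a => a < - Rabs T) (fun b => Rabs T < b); try now exists (Rabs T).
      now exists (- Rabs T). auto.
    - intros [a b] [a' b'] [Ha Hb'] [Ha' Hb'']. simpl in *.
      apply (norm_compat1 (V:=C_R_NormedModule)). rewrite norm_C_R.
      rewrite <- (RInt_Chasles (V:=C_R_CompleteNormedModule) g a' a b'),
              <- (RInt_Chasles (V:=C_R_CompleteNormedModule) g a b b') by auto.
      pose proof (Rle_abs T). pose proof (Rle_abs (- T)). rewrite Rabs_Ropp in *.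
      assert (K1 : Cmod (RIntC g a' a) <= eps / 3) by (apply HT; right; apply Rmax_lub; lra).
      assert (K2 : Cmod (RIntC g b b') <= eps / 3) by (apply HT; left; apply Rmin_glb; lra).
      replace (minus _ (RIntC g a b)) with (Cplus (RIntC g a' a) (RIntC g b b'))
        by (change plus with Cplus; change minus with Cminus; ring).
      eapply Rle_lt_trans; [apply Cmod_triangle|]. destruct eps; simpl in *; lra. }
  destruct (proj1 (filterlim_locally_cauchy
    (F := filter_prod (Rbar_locally m_infty) (Rbar_locally p_infty))
    (fun ab : R * R => RIntC g (fst ab) (snd ab) : C_R_CompleteNormedModule)) Hcauchy) as [l Hl].
  exists l. intros P HP. specialize (Hl P HP). unfold filtermap in Hl. unfold filtermapi.
  revert Hl. apply filter_imp.
  intros [a b] HPab. exists (RIntC g a b). split; [|exact HPab].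
  apply (RInt_correct (V:=C_R_CompleteNormedModule)), Hg.
Qed.

Lemma RInt_scal_R (h : R -> R) (lam u v : R) : ex_RInt h u v ->
  RInt (fun x => lam * h x) u v = lam * RInt h u v.
Proof. apply (RInt_scal (V:=R_CompleteNormedModule)). Qed.

Lemma tails_vanish_scal (h : R -> R) (lam : R) : 0 <= lam ->
  (forall a b, ex_RInt h a b) -> tails_vanish h -> tails_vanish (fun x => lam * h x).
Proof.
  intros Hlam Hh Ht eps He.
  destruct (Ht (eps / (lam + 1))) as [T HT]; [apply Rdiv_lt_0_compat; lra|].
  exists T. intros u v Huv Hout. rewrite RInt_scal_R by auto.
  apply Rle_trans with (lam * (eps / (lam + 1))); [apply Rmult_le_compat_l; auto|].
  apply Rmult_le_reg_r with (lam + 1); [lra|].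
  replace (lam * (eps / (lam + 1)) * (lam + 1)) with (lam * eps) by (field; lra). nra.
Qed.

(** * Weighted integrability under polynomial growth *)

Lemma nat_above (z : R) : exists n : nat, z <= INR n.
Proof.
  destruct (archimed z) as [H _].
  destruct (Z_le_gt_dec 0 (up z)) as [Hz|Hz].
  - exists (Z.to_nat (up z)). rewrite INR_IZR_INZ, Z2Nat.id by exact Hz. lra.
  - exists 0%nat. apply Z.gt_lt, IZR_lt in Hz. simpl. lra.
Qed.

Lemma eventually_div_INR_le (M eps : R) : 0 <= M -> 0 < eps ->
  exists K0 : nat, forall k, (K0 <= k)%nat -> 1 <= INR k /\ M / INR k <= eps.
Proof.
  intros HM He. destruct (nat_above (M / eps + 1)) as [K0 HK0].
  assert (0 <= M / eps) by (apply Rdiv_le_0_compat; lra).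
  exists K0. intros k Hk. apply le_INR in Hk. split; [lra|].
  apply Rmult_le_reg_r with (INR k / eps); [apply Rdiv_lt_0_compat; lra|].
  replace (M / INR k * (INR k / eps)) with (M / eps) by (field; lra).
  replace (eps * (INR k / eps)) with (INR k) by (field; lra). lra.
Qed.

Definition poly_weight (P : nat) (x : R) : R := / (1 + x ^ 2) ^ P.

Lemma poly_weight_pos P x : 0 < poly_weight P x.
Proof. apply Rinv_0_lt_compat, pow_lt. pose proof (pow2_ge_0 x). lra. Qed.

Lemma continuous_poly_weight P x : continuous (poly_weight P) x.
Proof.
  apply (ex_derive_continuous (V:=R_NormedModule)). unfold poly_weight.
  auto_derive. apply pow_nonzero. pose proof (pow2_ge_0 x). lra.
Qed.

Lemma poly_weight_le_scaled (P : nat) (s x y : R) :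
  0 < s -> s * (1 + x ^ 2) <= 1 + y ^ 2 -> poly_weight P y <= poly_weight P x / s ^ P.
Proof.
  intros Hs Hxy. pose proof (pow2_ge_0 x). unfold poly_weight, Rdiv.
  rewrite <- Rinv_mult, <- Rpow_mult_distr, Rmult_comm.
  apply Rinv_le_contravar; [apply pow_lt; nra|apply pow_incr; nra].
Qed.

Lemma poly_weight_antimono (P : nat) (x y : R) :
  x ^ 2 <= y ^ 2 -> poly_weight P y <= poly_weight P x.
Proof.
  intros Hxy. rewrite <- (Rdiv_1_r (poly_weight P x)), <- (pow1 P).
  apply poly_weight_le_scaled; lra.
Qed.

Lemma RInt_le_of_subinterval (w : R -> R) s u v t :
  (forall x, 0 <= w x) -> (forall a b, ex_RInt w a b) ->
  s <= u -> u <= v -> v <= t -> RInt w u v <= RInt w s t.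
Proof.
  intros Hw He H1 H2 H3.
  rewrite <- (RInt_Chasles w s u t), <- (RInt_Chasles w u v t) by auto.
  assert (0 <= RInt w s u) by (apply RInt_ge_0; auto).
  assert (0 <= RInt w v t) by (apply RInt_ge_0; auto).
  unfold plus; simpl. lra.
Qed.

Section PolynomialGrowth.

Variables (A : R -> R) (C0 : R) (N : nat).
Hypothesis A_nonneg : forall x, 0 <= A x.
Hypothesis A_ex_RInt : forall a b, ex_RInt A a b.
Hypothesis A_growth : forall r, 0 < r -> RInt A (- r) r <= C0 * (1 + r) ^ N.
Hypothesis weighted_ex_RInt : forall a b, ex_RInt (fun x => A x * poly_weight (N + 2) x) a b.

Let Aw x := A x * poly_weight (N + 2) x.
Let D r := RInt Aw (- r) r.

Lemma RInt_A_nonneg u v : u <= v -> 0 <= RInt A u v.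
Proof. intros Huv. apply RInt_ge_0; auto. Qed.

Lemma growth_constant_nonneg : 0 <= C0.
Proof.
  assert (H := A_growth 1 Rlt_0_1). pose proof (pow_lt (1 + 1) N ltac:(lra)).
  pose proof (RInt_A_nonneg (Ropp 1) 1 ltac:(lra)). nra.
Qed.

Lemma Aw_nonneg x : 0 <= Aw x.
Proof. unfold Aw. pose proof (poly_weight_pos (N + 2) x). pose proof (A_nonneg x). nra. Qed.

Lemma D_sub (s t : R) : D t - D s = RInt Aw (- t) (- s) + RInt Aw s t.
Proof.
  unfold D. rewrite <- (RInt_Chasles Aw (- t) (- s) t), <- (RInt_Chasles Aw (- s) s t)
    by apply weighted_ex_RInt.
  unfold plus; simpl. ring.
Qed.

Lemma RInt_Aw_le_far (m u v : R) : u <= v -> (forall x, u <= x <= v -> m ^ 2 <= x ^ 2) ->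
  RInt Aw u v <= poly_weight (N + 2) m * RInt A u v.
Proof.
  intros Huv Hm. rewrite <- (RInt_scal (V:=R_CompleteNormedModule)) by apply A_ex_RInt.
  apply RInt_le; auto.
  - apply (ex_RInt_scal (V:=R_NormedModule)), A_ex_RInt.
  - intros x Hx. unfold Aw. change (scal ?k ?y) with (k * y). rewrite Rmult_comm.
    apply Rmult_le_compat_r; [apply A_nonneg|]. apply poly_weight_antimono, Hm. lra.
Qed.

Lemma shell_constant (m : R) : 0 <= m ->
  (m + 2) ^ N * ((m + 1) * (m + 2)) <= 3 ^ (N + 2) * (1 + m ^ 2) ^ (N + 2).
Proof.
  intros Hm. rewrite <- Rpow_mult_distr.
  apply Rle_trans with ((m + 2) ^ (N + 2)).
  - rewrite pow_add. apply Rmult_le_compat_l; [apply pow_le; lra|]. simpl. nra.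
  - apply pow_incr. nra.
Qed.

(* On the shell [n <= |x| <= n + 1] the weight is at most [(1 + n^2)^-(N+2)], and the growth
   hypothesis bounds the mass of [A] there by [C0 (n + 2)^N]; the product is
   [O(1/((n + 1)(n + 2)))], which telescopes. *)
Lemma D_shell (n : nat) :
  D (INR n + 1) - D (INR n) <= C0 * 3 ^ (N + 2) * (/ (INR n + 1) - / (INR n + 2)).
Proof.
  set (m := INR n). assert (Hm : 0 <= m) by apply pos_INR.
  rewrite D_sub.
  set (B := poly_weight (N + 2) m). assert (HB : 0 < B) by apply poly_weight_pos.
  assert (Hl : RInt Aw (- (m + 1)) (- m) <= B * RInt A (- (m + 1)) (- m))
    by (apply RInt_Aw_le_far; [lra|intros x Hx; nra]).
  assert (Hr : RInt Aw m (m + 1) <= B * RInt A m (m + 1))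
    by (apply RInt_Aw_le_far; [lra|intros x Hx; nra]).
  assert (Hsum : RInt A (- (m + 1)) (- m) + RInt A m (m + 1) <= C0 * (m + 2) ^ N).
  { assert (H0 := RInt_A_nonneg (- m) m ltac:(lra)).
    assert (Hg := A_growth (m + 1) ltac:(lra)).
    rewrite <- (RInt_Chasles A (- (m + 1)) (- m) (m + 1)),
            <- (RInt_Chasles A (- m) m (m + 1)) in Hg by auto.
    replace (1 + (m + 1)) with (m + 2) in Hg by ring. unfold plus in Hg; simpl in Hg. lra. }
  pose proof growth_constant_nonneg as HC0.
  replace (/ (m + 1) - / (m + 2)) with (/ ((m + 1) * (m + 2))) by (field; lra).
  assert (HW : 0 < (1 + m ^ 2) ^ (N + 2)) by (apply pow_lt; nra).
  assert (Hk : B * (m + 2) ^ N <= 3 ^ (N + 2) * / ((m + 1) * (m + 2))).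
  { apply Rmult_le_reg_r with ((1 + m ^ 2) ^ (N + 2) * ((m + 1) * (m + 2))); [nra|].
    replace (B * (m + 2) ^ N * ((1 + m ^ 2) ^ (N + 2) * ((m + 1) * (m + 2))))
      with ((m + 2) ^ N * ((m + 1) * (m + 2))) by (unfold B, poly_weight; field; lra).
    replace (3 ^ (N + 2) * / ((m + 1) * (m + 2)) * ((1 + m ^ 2) ^ (N + 2) * ((m + 1) * (m + 2))))
      with (3 ^ (N + 2) * (1 + m ^ 2) ^ (N + 2)) by (field; lra).
    apply shell_constant, Hm. }
  apply Rle_trans with (B * (C0 * (m + 2) ^ N)); [nra|].
  rewrite (Rmult_assoc C0). nra.
Qed.

Lemma D_telescope (n j : nat) :
  D (INR n + INR j) - D (INR n) <= C0 * 3 ^ (N + 2) * (/ (INR n + 1) - / (INR n + INR j + 1)).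
Proof.
  induction j as [|j IH].
  - simpl. rewrite !Rplus_0_r. lra.
  - assert (Hs := D_shell (n + j)). rewrite plus_INR in Hs.
    rewrite S_INR, <- Rplus_assoc.
    replace (INR n + INR j + 1 + 1) with (INR n + INR j + 2) by ring. lra.
Qed.

Lemma RInt_tail_le_D_sub (n : nat) (u v : R) : u <= v ->
  (INR n <= u \/ v <= - INR n) -> exists j : nat,
  RInt Aw u v <= D (INR n + INR j) - D (INR n).
Proof.
  intros Huv Hn. destruct (nat_above (Rmax (Rabs u) (Rabs v))) as [j Hj]. exists j.
  pose proof (Rmax_l (Rabs u) (Rabs v)). pose proof (Rmax_r (Rabs u) (Rabs v)).
  pose proof (Rle_abs u). pose proof (Rle_abs (- u)).
  pose proof (Rle_abs v). pose proof (Rle_abs (- v)).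
  rewrite Rabs_Ropp in *. pose proof (pos_INR n).
  rewrite D_sub.
  assert (Hneg : 0 <= RInt Aw (- (INR n + INR j)) (- INR n))
    by (apply RInt_ge_0; [lra|auto|intros; apply Aw_nonneg]).
  assert (Hpos : 0 <= RInt Aw (INR n) (INR n + INR j))
    by (apply RInt_ge_0; [lra|auto|intros; apply Aw_nonneg]).
  destruct Hn as [Hn|Hn].
  - enough (RInt Aw u v <= RInt Aw (INR n) (INR n + INR j)) by lra.
    apply RInt_le_of_subinterval; auto using Aw_nonneg; lra.
  - enough (RInt Aw u v <= RInt Aw (- (INR n + INR j)) (- INR n)) by lra.
    apply RInt_le_of_subinterval; auto using Aw_nonneg; lra.
Qed.

Lemma RInt_weighted_le (u v : R) : u <= v ->
  RInt (fun x => A x * poly_weight (N + 2) x) u v <= C0 * 3 ^ (N + 2).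
Proof.
  intros Huv. destruct (nat_above (Rmax (Rabs u) (Rabs v))) as [j Hj].
  pose proof (Rmax_l (Rabs u) (Rabs v)). pose proof (Rmax_r (Rabs u) (Rabs v)).
  pose proof (Rle_abs u). pose proof (Rle_abs (- u)).
  pose proof (Rle_abs v). pose proof (Rle_abs (- v)).
  rewrite Rabs_Ropp in *.
  apply Rle_trans with (D (INR j)).
  { apply RInt_le_of_subinterval; [apply Aw_nonneg|apply weighted_ex_RInt|lra..]. }
  assert (Ht := D_telescope 0 j). simpl INR in Ht. rewrite Rplus_0_l in Ht.
  assert (HD0 : D 0 = 0) by (unfold D; rewrite Ropp_0; exact (RInt_point 0 Aw)).
  assert (0 < / (INR j + 1)) by (apply Rinv_0_lt_compat; pose proof (pos_INR j); lra).
  assert (HK : 0 <= C0 * 3 ^ (N + 2))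
    by (apply Rmult_le_pos; [apply growth_constant_nonneg|apply pow_le; lra]).
  rewrite HD0, Rplus_0_l, Rinv_1 in Ht. nra.
Qed.

Lemma weighted_tails_vanish : tails_vanish (fun x => A x * poly_weight (N + 2) x).
Proof.
  intros eps He. set (K := C0 * 3 ^ (N + 2)).
  assert (HK : 0 <= K) by (apply Rmult_le_pos; [apply growth_constant_nonneg|apply pow_le; lra]).
  destruct (nat_above (K / eps)) as [n Hn]. exists (INR n). intros u v Huv Hout.
  destruct (RInt_tail_le_D_sub n u v Huv Hout) as [j Hj].
  eapply Rle_trans; [exact Hj|]. eapply Rle_trans; [apply D_telescope|].
  pose proof (pos_INR n). pose proof (pos_INR j).
  assert (0 < / (INR n + INR j + 1)) by (apply Rinv_0_lt_compat; lra).
  enough (K * / (INR n + 1) <= eps) by (fold K; nra).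
  apply Rmult_le_reg_r with (INR n + 1); [lra|].
  rewrite Rmult_assoc, Rinv_l, Rmult_1_r by lra.
  apply Rmult_le_reg_r with (/ eps); [apply Rinv_0_lt_compat; lra|].
  replace ((eps * (INR n + 1)) * / eps) with (INR n + 1) by (field; lra). unfold Rdiv in Hn. lra.
Qed.

End PolynomialGrowth.

(** * Decay of Schwartz functions and of the mollifiers *)

Lemma Schwartz_continuous (phi : R -> C) : Schwartz phi -> forall x, continuous phi x.
Proof.
  intros [D [HD0 [HD _]]] x. subst phi.
  apply (ex_derive_continuous (V:=prod_NormedModule R_AbsRing R_NormedModule R_NormedModule)).
  eexists. apply HD.
Qed.

Lemma Schwartz_tail_bound (phi : R -> C) (m : nat) : Schwartz phi ->
  exists Y, 1 <= Y /\ forall y, Y <= Rabs y -> Rabs (y ^ m) * Cmod (phi y) <= 1.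
Proof.
  intros [D [HD0 [_ HL]]]. destruct (HL m 0%nat) as [Hp Hm]. rewrite HD0 in Hp, Hm.
  destruct (filterlim_Cmod_lt _ _ _ Hp (mkposreal 1 Rlt_0_1)) as [M1 H1].
  destruct (filterlim_Cmod_lt _ _ _ Hm (mkposreal 1 Rlt_0_1)) as [M2 H2].
  pose proof (Rle_abs M1). pose proof (Rle_abs (- M2)). rewrite Rabs_Ropp in *.
  pose proof (Rabs_pos M1). pose proof (Rabs_pos M2).
  exists (1 + Rabs M1 + Rabs M2). split; [lra|].
  intros y Hy. rewrite <- Cmod_R, <- Cmod_mult.
  replace (Cmult (RtoC (y ^ m)) (phi y))
    with (Cminus (Cmult (RtoC (y ^ m)) (phi y)) (RtoC 0)) by ring.
  destruct (Rle_or_lt 0 y).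
  - rewrite (Rabs_pos_eq y) in Hy by lra. apply Rlt_le, H1. lra.
  - rewrite (Rabs_left y) in Hy by lra. apply Rlt_le, H2. lra.
Qed.

Lemma Schwartz_decay (phi : R -> C) (P : nat) : Schwartz phi ->
  exists Q, 0 <= Q /\ forall y, Cmod (phi y) <= Q * poly_weight P y.
Proof.
  intros HS. destruct (Schwartz_tail_bound phi (2 * P) HS) as [Y [HY1 HY]].
  destruct (bounded_continuity (V:=C_NormedModule) phi (- Y) Y) as [M HM].
  { intros x _. apply Schwartz_continuous, HS. }
  assert (HM0 : 0 <= M).
  { assert (H0 : - Y <= 0 <= Y) by lra. specialize (HM 0 H0). change (Cmod (phi 0) < M) in HM.
    pose proof (Cmod_ge_0 (phi 0)). lra. }
  assert (HYP : 0 <= (1 + Y ^ 2) ^ P) by (apply pow_le; nra).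
  exists (2 ^ P + M * (1 + Y ^ 2) ^ P). split; [pose proof (pow_le 2 P); nra|].
  intros y. pose proof (Cmod_ge_0 (phi y)). pose proof (pow_le 2 P ltac:(lra)).
  assert (Hw : 0 < (1 + y ^ 2) ^ P) by (apply pow_lt; nra).
  apply Rmult_le_reg_r with ((1 + y ^ 2) ^ P); [exact Hw|].
  unfold poly_weight. rewrite Rmult_assoc, Rinv_l, Rmult_1_r by lra.
  destruct (Rle_or_lt Y (Rabs y)) as [Hfar|Hnear].
  - specialize (HY y Hfar). rewrite pow_mult, Rabs_pos_eq in HY by (apply pow_le; nra).
    assert (Hy2 : 1 <= y ^ 2) by (rewrite <- pow2_abs; nra).
    assert (H2 : (1 + y ^ 2) ^ P <= 2 ^ P * (y ^ 2) ^ P)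
      by (rewrite <- Rpow_mult_distr; apply pow_incr; lra).
    apply Rle_trans with (Cmod (phi y) * (2 ^ P * (y ^ 2) ^ P)); [apply Rmult_le_compat_l; lra|].
    nra.
  - assert (Hy : - Y <= y <= Y) by (apply Rabs_def2 in Hnear; lra).
    specialize (HM y Hy). change (Cmod (phi y) < M) in HM.
    assert ((1 + y ^ 2) ^ P <= (1 + Y ^ 2) ^ P).
    { apply pow_incr. split; [nra|]. rewrite <- (pow2_abs y). pose proof (Rabs_pos y). nra. }
    assert (Cmod (phi y) * (1 + y ^ 2) ^ P <= M * (1 + Y ^ 2) ^ P) by (apply Rmult_le_compat; lra).
    lra.
Qed.

Lemma Cmod_phi_kc (phi : R -> C) k c x :
  Cmod (phi_kc phi k c x) = INR k * Cmod (phi (INR k * (x - c))).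
Proof. unfold phi_kc. rewrite Cmod_mult, Cmod_R, Rabs_pos_eq by apply pos_INR. reflexivity. Qed.

Lemma continuous_phi_kc (phi : R -> C) k c :
  (forall y, continuous phi y) -> forall x, continuous (phi_kc phi k c) x.
Proof.
  intros Hphi x. unfold phi_kc, continuous.
  apply (filterlim_comp_2 (G:=locally (RtoC (INR k))) (H:=locally (phi (INR k * (x - c))))
           (fun _ => RtoC (INR k)) (fun y => phi (INR k * (y - c))) Cmult
           (filterlim_const _)); [|apply filterlim_Cmult].
  apply (continuous_comp (fun y => INR k * (y - c)) phi); [|apply Hphi].
  apply (ex_derive_continuous (V:=R_NormedModule)). auto_derive. exact I.
Qed.

Lemma one_plus_sq_shift (x c : R) : 1 + x ^ 2 <= 2 * (1 + c ^ 2) * (1 + (x - c) ^ 2).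
Proof. pose proof (pow2_ge_0 (x - 2 * c)). pose proof (pow2_ge_0 (c * (x - c))). nra. Qed.

Lemma one_plus_sq_far (k c delta x : R) : 0 < delta -> delta <= Rabs (x - c) ->
  k ^ 2 * / (2 * (1 + c ^ 2) * (1 + / delta ^ 2)) * (1 + x ^ 2) <= 1 + (k * (x - c)) ^ 2.
Proof.
  intros Hd Hx.
  set (L := 2 * (1 + c ^ 2) * (1 + / delta ^ 2)). set (t := (x - c) ^ 2).
  assert (Hd2 : 0 < delta ^ 2) by (apply pow_lt, Hd).
  assert (HL : 0 < L)
    by (unfold L; pose proof (pow2_ge_0 c); pose proof (Rinv_0_lt_compat _ Hd2); nra).
  assert (Ht : delta ^ 2 <= t) by (unfold t; rewrite <- (pow2_abs (x - c)); nra).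
  assert (Hxt : 1 + x ^ 2 <= L * t).
  { eapply Rle_trans; [apply one_plus_sq_shift|]. unfold L. rewrite (Rmult_assoc _ (1 + _) t).
    apply Rmult_le_compat_l; [pose proof (pow2_ge_0 c); lra|]. fold t.
    assert (1 <= t * / delta ^ 2)
      by (apply Rmult_le_reg_r with (delta ^ 2); [lra|]; rewrite Rmult_assoc, Rinv_l; lra).
    lra. }
  rewrite Rpow_mult_distr. fold t.
  apply Rle_trans with (k ^ 2 * t); [|pose proof (pow2_ge_0 k); nra].
  rewrite Rmult_assoc. apply Rmult_le_compat_l; [apply pow2_ge_0|].
  apply Rmult_le_reg_l with L; [exact HL|]. rewrite <- Rmult_assoc, Rinv_r, Rmult_1_l; lra.
Qed.

Section MollifierBounds.

Variables (phi : R -> C) (Q : R) (P : nat).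
Hypothesis Q_nonneg : 0 <= Q.
Hypothesis phi_decay : forall y, Cmod (phi y) <= Q * poly_weight P y.

Lemma phi_kc_bound k c x :
  Cmod (phi_kc phi k c x) <= INR k * Q * (2 * (1 + c ^ 2)) ^ P * poly_weight P x.
Proof.
  rewrite Cmod_phi_kc. destruct k as [|k]; [simpl; lra|].
  assert (Hk : 1 <= INR (S k)) by (rewrite S_INR; pose proof (pos_INR k); lra).
  assert (Hc : 0 < 2 * (1 + c ^ 2)) by (pose proof (pow2_ge_0 c); lra).
  assert (Hs : / (2 * (1 + c ^ 2)) * (1 + x ^ 2) <= 1 + (INR (S k) * (x - c)) ^ 2).
  { apply Rmult_le_reg_l with (2 * (1 + c ^ 2)); [exact Hc|].
    rewrite <- Rmult_assoc, Rinv_r, Rmult_1_l by lra.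
    eapply Rle_trans; [apply one_plus_sq_shift|]. apply Rmult_le_compat_l; [lra|].
    pose proof (pow2_ge_0 (x - c)). rewrite Rpow_mult_distr.
    assert (1 <= INR (S k) ^ 2) by nra. nra. }
  assert (Hw := poly_weight_le_scaled P _ _ _ (Rinv_0_lt_compat _ Hc) Hs).
  unfold Rdiv in Hw. rewrite pow_inv, Rinv_inv in Hw.
  rewrite !Rmult_assoc. apply Rmult_le_compat_l; [lra|].
  eapply Rle_trans; [apply phi_decay|]. apply Rmult_le_compat_l; [exact Q_nonneg|]. lra.
Qed.

Lemma phi_kc_far_bound k c delta x :
  0 < delta -> (1 <= P)%nat -> 1 <= INR k -> delta <= Rabs (x - c) ->
  Cmod (phi_kc phi k c x)
    <= Q * (2 * (1 + c ^ 2) * (1 + / delta ^ 2)) ^ P / INR k * poly_weight P x.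
Proof.
  intros Hd HP Hk Hx. rewrite Cmod_phi_kc.
  set (L := 2 * (1 + c ^ 2) * (1 + / delta ^ 2)).
  assert (HL : 0 < L).
  { unfold L. pose proof (pow2_ge_0 c). pose proof (Rinv_0_lt_compat _ (pow_lt _ 2 Hd)). nra. }
  assert (Hk2 : 1 <= INR k ^ 2) by nra.
  assert (Hw := poly_weight_le_scaled P _ _ _
                  (Rmult_lt_0_compat (INR k ^ 2) (/ L) ltac:(lra) (Rinv_0_lt_compat _ HL))
                  (one_plus_sq_far (INR k) c delta x Hd Hx)).
  fold L in Hw. rewrite Rpow_mult_distr, pow_inv in Hw.
  set (a := (INR k ^ 2) ^ P) in Hw. set (b := L ^ P) in *.
  assert (Ha : INR k ^ 2 <= a)
    by (unfold a; rewrite <- (pow_1 (INR k ^ 2)) at 1; apply Rle_pow; [lra|lia]).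
  assert (Hb : 0 < b) by (apply pow_lt, HL).
  pose proof (poly_weight_pos P x).
  apply Rle_trans with (INR k * (Q * (poly_weight P x / (a * / b))));
    [apply Rmult_le_compat_l; [lra|];
     eapply Rle_trans; [apply phi_decay|apply Rmult_le_compat_l; lra]|].
  replace (INR k * (Q * (poly_weight P x / (a * / b)))) with (Q * b * poly_weight P x * (INR k / a))
    by (field; nra).
  replace (Q * b / INR k * poly_weight P x) with (Q * b * poly_weight P x * / INR k)
    by (field; lra).
  apply Rmult_le_compat_l; [apply Rmult_le_pos; [apply Rmult_le_pos|]; lra|].
  apply Rmult_le_reg_r with (a * INR k); [nra|].
  replace (INR k / a * (a * INR k)) with (INR k ^ 2) by (field; nra).
  replace (/ INR k * (a * INR k)) with a by (field; lra). exact Ha.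
Qed.

End MollifierBounds.

(** * Lorentzian kernel and half masses *)

Definition lorentz_kc (k c x : R) : R := k * poly_weight 1 (k * (x - c)).

Lemma is_RInt_lorentz_kc (k c u v : R) :
  is_RInt (lorentz_kc k c) u v (atan (k * (v - c)) - atan (k * (u - c))).
Proof.
  apply (is_RInt_derive (V:=R_CompleteNormedModule) (fun x => atan (k * (x - c)))).
  - intros x _.
    assert (Ha : is_derive atan (k * (x - c)) (/ (1 + (k * (x - c)) ^ 2)))
      by apply is_derive_Reals, derivable_pt_lim_atan.
    assert (Hl : is_derive (fun y => k * (y - c)) x k) by (auto_derive; [exact I|ring]).
    replace (lorentz_kc k c x) with (scal k (/ (1 + (k * (x - c)) ^ 2)))
      by (unfold lorentz_kc, poly_weight; rewrite pow_1; reflexivity).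
    exact (is_derive_comp atan (fun y => k * (y - c)) x _ _ Ha Hl).
  - intros x _. apply (ex_derive_continuous (V:=R_NormedModule)). unfold lorentz_kc, poly_weight.
    auto_derive. pose proof (pow2_ge_0 (k * (x - c))). lra.
Qed.

Lemma RInt_lorentz_kc_le (k c u v : R) : RInt (lorentz_kc k c) u v <= PI.
Proof.
  rewrite (is_RInt_unique _ _ _ _ (is_RInt_lorentz_kc k c u v)).
  pose proof (atan_bound (k * (v - c))). pose proof (atan_bound (k * (u - c))). lra.
Qed.

Lemma filterlim_RInt_gen_sym (g : R -> C) (l : C) :
  is_RInt_gen g (Rbar_locally m_infty) (Rbar_locally p_infty) l ->
  filterlim (fun b => RIntC g (- b) b) (Rbar_locally p_infty) (locally l).
Proof.
  intros H P HP. destruct (H P HP) as [Q R [M1 HQ] [M2 HR] HQR].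
  exists (Rmax (- M1) M2). intros b Hb.
  pose proof (Rmax_l (- M1) M2). pose proof (Rmax_r (- M1) M2).
  destruct (HQR (- b) b) as [y [Hy HPy]]; [apply HQ; lra|apply HR; lra|].
  simpl in Hy. rewrite (is_RInt_unique (V:=C_R_CompleteNormedModule) _ _ _ _ Hy). exact HPy.
Qed.

Lemma RInt_even_sym (phi : R -> C) : (forall x, phi (- x) = phi x) ->
  (forall a b, ex_RInt phi a b) -> forall b, RIntC phi (- b) 0 = RIntC phi 0 b.
Proof.
  intros Hev Hex b.
  assert (H1 : is_RInt (fun y => opp (phi y)) 0 b (RIntC phi 0 (- b))).
  { rewrite <- Ropp_0 at 1. eapply is_RInt_ext; [|apply is_RInt_comp_opp].
    - intros x _. simpl. rewrite Hev. reflexivity.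
    - rewrite Ropp_involutive. apply (RInt_correct (V:=C_R_CompleteNormedModule)), Hex. }
  assert (H2 : is_RInt (fun y => opp (phi y)) 0 b (opp (RIntC phi 0 b)))
    by apply (is_RInt_opp (V:=C_R_NormedModule)), (RInt_correct (V:=C_R_CompleteNormedModule)), Hex.
  rewrite <- (opp_RInt_swap (V:=C_R_CompleteNormedModule)) by apply Hex.
  rewrite <- (is_RInt_unique (V:=C_R_CompleteNormedModule) _ _ _ _ H1),
          (is_RInt_unique (V:=C_R_CompleteNormedModule) _ _ _ _ H2).
  apply (opp_opp (G:=C_R_CompleteNormedModule)).
Qed.

Lemma half_mass (phi : R -> C) : (forall x, phi (- x) = phi x) ->
  (forall a b, ex_RInt phi a b) ->
  is_RInt_gen phi (Rbar_locally m_infty) (Rbar_locally p_infty) (RtoC 1) ->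
  filterlim (fun b => RIntC phi 0 b) (Rbar_locally p_infty) (locally (RtoC (/ 2))).
Proof.
  intros Hev Hex Hmass.
  apply filterlim_ext with (fun b => scal (/ 2) (RIntC phi (- b) b)).
  - intros b. rewrite <- (RInt_Chasles (V:=C_R_CompleteNormedModule) phi (- b) 0 b) by apply Hex.
    rewrite (RInt_even_sym phi Hev Hex b). destruct (RIntC phi 0 b) as [x1 x2].
    unfold scal, plus; simpl. unfold prod_scal, prod_plus, scal, plus; simpl.
    unfold mult; simpl. f_equal; field.
  - replace (RtoC (/ 2)) with (@scal _ C_R_NormedModule (/ 2) (RtoC 1))
      by (unfold scal; simpl; unfold prod_scal, scal; simpl; unfold mult; simpl;
          unfold RtoC; f_equal; ring).
    eapply filterlim_comp;
      [apply filterlim_RInt_gen_sym, Hmass|apply (filterlim_scal_r (V:=C_R_NormedModule))].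
Qed.

Lemma RInt_phi_kc (phi : R -> C) (k : nat) (c u v : R) : (forall a b, ex_RInt phi a b) ->
  RIntC (phi_kc phi k c) u v = RIntC phi (INR k * (u - c)) (INR k * (v - c)).
Proof.
  intros Hex.
  assert (E := RInt_comp_lin (V:=C_R_CompleteNormedModule)
                 phi (INR k) (- (INR k) * c) u v (Hex _ _)).
  replace (INR k * u + - INR k * c) with (INR k * (u - c)) in E by ring.
  replace (INR k * v + - INR k * c) with (INR k * (v - c)) in E by ring.
  rewrite <- E. apply RInt_ext. intros x _. unfold phi_kc.
  rewrite scal_R_Cmult. do 2 f_equal. ring.
Qed.

Lemma filterlim_scaled_shift (k c : R) : 0 < k ->
  filterlim (fun b => k * (b - c)) (Rbar_locally p_infty) (Rbar_locally p_infty).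
Proof.
  intros Hk P [M HM]. exists (c + Rabs M / k). intros b Hb. apply HM.
  apply Rle_lt_trans with (Rabs M); [apply Rle_abs|].
  apply Rmult_lt_reg_r with (/ k); [apply Rinv_0_lt_compat, Hk|].
  replace (k * (b - c) * / k) with (b - c) by (field; lra). unfold Rdiv in Hb. lra.
Qed.

Lemma filterlim_scaled_shift_opp (k c : R) : 0 < k ->
  filterlim (fun a => k * (c - a)) (Rbar_locally m_infty) (Rbar_locally p_infty).
Proof.
  intros Hk P [M HM]. exists (c - Rabs M / k). intros a Ha. apply HM.
  apply Rle_lt_trans with (Rabs M); [apply Rle_abs|].
  apply Rmult_lt_reg_r with (/ k); [apply Rinv_0_lt_compat, Hk|].
  replace (k * (c - a) * / k) with (c - a) by (field; lra). unfold Rdiv in Ha. lra.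
Qed.

Section HalfMass.

Variable phi : R -> C.
Hypothesis phi_even : forall x, phi (- x) = phi x.
Hypothesis phi_ex_RInt : forall a b, ex_RInt phi a b.
Hypothesis phi_mass : is_RInt_gen phi (Rbar_locally m_infty) (Rbar_locally p_infty) (RtoC 1).

Lemma phi_kc_half_mass_right (k : nat) (c : R) : (0 < k)%nat ->
  filterlim (fun b => RIntC (phi_kc phi k c) c b) (Rbar_locally p_infty) (locally (RtoC (/ 2))).
Proof.
  intros Hk. apply lt_0_INR in Hk.
  apply filterlim_ext with (fun b => RIntC phi 0 (INR k * (b - c))).
  { intros b. rewrite RInt_phi_kc by auto. f_equal. ring. }
  eapply filterlim_comp; [apply filterlim_scaled_shift, Hk|apply half_mass; auto].
Qed.

Lemma phi_kc_half_mass_left (k : nat) (c : R) : (0 < k)%nat ->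
  filterlim (fun a => RIntC (phi_kc phi k c) a c) (Rbar_locally m_infty) (locally (RtoC (/ 2))).
Proof.
  intros Hk. apply lt_0_INR in Hk.
  apply filterlim_ext with (fun a => RIntC phi 0 (INR k * (c - a))).
  { intros a. rewrite RInt_phi_kc, <- RInt_even_sym by auto. f_equal; ring. }
  eapply filterlim_comp; [apply filterlim_scaled_shift_opp, Hk|apply half_mass; auto].
Qed.

End HalfMass.

(** * Convergence of the mollified integrals *)

Lemma Cmod_RInt_split_at (g h : R -> C) (Lm Lp : C) (a c b : R) :
  (forall u v, ex_RInt (fun x => Cmult (g x) (h x)) u v) -> (forall u v, ex_RInt h u v) ->
  Cmod (Cminus (RIntC (fun x => Cmult (g x) (h x)) a b) (Cmult (Cplus Lp Lm) (RtoC (/ 2)))) <=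
  Cmod (RIntC (fun x => Cmult (Cminus (g x) Lm) (h x)) a c)
  + Cmod (RIntC (fun x => Cmult (Cminus (g x) Lp) (h x)) c b)
  + Cmod Lm * Cmod (Cminus (RIntC h a c) (RtoC (/ 2)))
  + Cmod Lp * Cmod (Cminus (RIntC h c b) (RtoC (/ 2))).
Proof.
  intros Hgh Hh.
  rewrite (is_RInt_unique (V:=C_R_CompleteNormedModule) _ _ _ _
             (is_RInt_Cmult_sub g h Lm a c (Hgh _ _) (Hh _ _))),
          (is_RInt_unique (V:=C_R_CompleteNormedModule) _ _ _ _
             (is_RInt_Cmult_sub g h Lp c b (Hgh _ _) (Hh _ _))).
  rewrite <- (RInt_Chasles (V:=C_R_CompleteNormedModule) _ a c b) by auto.
  set (I1 := RIntC (fun x => Cmult (g x) (h x)) a c).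
  set (I2 := RIntC (fun x => Cmult (g x) (h x)) c b).
  set (J1 := RIntC h a c). set (J2 := RIntC h c b).
  change (plus I1 I2) with (Cplus I1 I2).
  replace (Cminus (Cplus I1 I2) (Cmult (Cplus Lp Lm) (RtoC (/ 2))))
    with (Cplus (Cplus (Cminus I1 (Cmult Lm J1)) (Cminus I2 (Cmult Lp J2)))
                (Cplus (Cmult Lm (Cminus J1 (RtoC (/ 2)))) (Cmult Lp (Cminus J2 (RtoC (/ 2))))))
    by (unfold RtoC; field_simplify; f_equal; ring).
  eapply Rle_trans; [apply Cmod_triangle|].
  pose proof (Cmod_triangle (Cminus I1 (Cmult Lm J1)) (Cminus I2 (Cmult Lp J2))).
  pose proof (Cmod_triangle (Cmult Lm (Cminus J1 (RtoC (/ 2))))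
                            (Cmult Lp (Cminus J2 (RtoC (/ 2))))).
  rewrite !Cmod_mult in *. lra.
Qed.

Section Mollification.

Variables (phi f : R -> C) (c C0 : R) (N : nat) (Lp Lm : C).
Hypothesis phi_Schwartz : Schwartz phi.
Hypothesis phi_even : forall x, phi (- x) = phi x.
Hypothesis phi_mass : is_RInt_gen phi (Rbar_locally m_infty) (Rbar_locally p_infty) (RtoC 1).
Hypothesis f_pw : pw_continuous f.
Hypothesis f_growth : forall r, 0 < r -> RInt (fun x => Cmod (f x)) (- r) r <= C0 * (1 + r) ^ N.
Hypothesis f_right : filterlim f (at_right c) (locally Lp).
Hypothesis f_left : filterlim f (at_left c) (locally Lm).

Let S := Cmod Lp + Cmod Lm.
Let A x := Cmod (f x) + S.
(* [A] has growth exponent [N + 1] (the constant [S] adds a linear term), hence the weight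
   exponent [(N + 1) + 2]. *)
Let P := (N + 1 + 2)%nat.
Let Ktot := (C0 + 2 * S) * 3 ^ P.

Lemma phi_ex_RInt a b : ex_RInt phi a b.
Proof.
  apply (ex_RInt_continuous (V:=C_R_CompleteNormedModule)). intros x _.
  apply Schwartz_continuous, phi_Schwartz.
Qed.

Lemma phi_kc_ex_RInt k a b : ex_RInt (phi_kc phi k c) a b.
Proof.
  apply (ex_RInt_continuous (V:=C_R_CompleteNormedModule)). intros x _.
  apply continuous_phi_kc, Schwartz_continuous, phi_Schwartz.
Qed.

Lemma f_phi_kc_ex_RInt k a b : ex_RInt (fun x => Cmult (f x) (phi_kc phi k c x)) a b.
Proof.
  apply (pw_continuous_ex_RInt (V:=C_R_CompleteNormedModule)).
  apply (pw_continuous_comp2 f (phi_kc phi k c) Cmult f_pw); [|apply filterlim_Cmult].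
  apply pw_continuous_of_continuous, continuous_phi_kc, Schwartz_continuous, phi_Schwartz.
Qed.

Lemma S_nonneg : 0 <= S.
Proof. unfold S. pose proof (Cmod_ge_0 Lp). pose proof (Cmod_ge_0 Lm). lra. Qed.

Lemma A_pw_continuous : pw_continuous A.
Proof.
  apply (pw_continuous_comp (fun x => Cmod (f x)) (fun y => y + S));
    [apply pw_continuous_comp; [exact f_pw|apply continuous_Cmod]|apply continuous_Rplus_r].
Qed.

Lemma A_ex_RInt a b : ex_RInt A a b.
Proof. apply (pw_continuous_ex_RInt (V:=R_CompleteNormedModule)), A_pw_continuous. Qed.

Lemma A_weighted_ex_RInt a b : ex_RInt (fun x => A x * poly_weight P x) a b.
Proof.
  apply (pw_continuous_ex_RInt (V:=R_CompleteNormedModule)).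
  apply (pw_continuous_comp2 A (poly_weight P) Rmult A_pw_continuous); [|apply filterlim_Rmult].
  apply pw_continuous_of_continuous, continuous_poly_weight.
Qed.

Lemma A_nonneg x : 0 <= A x.
Proof. unfold A. pose proof (Cmod_ge_0 (f x)). pose proof S_nonneg. lra. Qed.

Lemma f_Cmod_ex_RInt a b : ex_RInt (fun x => Cmod (f x)) a b.
Proof.
  apply (pw_continuous_ex_RInt (V:=R_CompleteNormedModule)), pw_continuous_comp;
    [exact f_pw|apply continuous_Cmod].
Qed.

Lemma A_growth r : 0 < r -> RInt A (- r) r <= (C0 + 2 * S) * (1 + r) ^ (N + 1).
Proof.
  intros Hr. unfold A.
  rewrite (RInt_plus (V:=R_CompleteNormedModule) (fun x => Cmod (f x)) (fun _ => S))
    by (apply f_Cmod_ex_RInt || apply ex_RInt_const).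
  rewrite RInt_const. change (plus ?x ?y) with (x + y). change (scal ?x ?y) with (x * y).
  assert (HC0 : 0 <= C0)
    by (apply (growth_constant_nonneg (fun x => Cmod (f x)) C0 N);
        [intros; apply Cmod_ge_0|apply f_Cmod_ex_RInt|exact f_growth]).
  assert (H1 : (1 + r) ^ N <= (1 + r) ^ (N + 1)) by (apply Rle_pow; [lra|lia]).
  assert (H2 : 1 + r <= (1 + r) ^ (N + 1))
    by (rewrite <- (pow_1 (1 + r)) at 1; apply Rle_pow; [lra|lia]).
  pose proof (f_growth r Hr). pose proof S_nonneg. nra.
Qed.

Lemma Cmod_f_sub_le_A (L : C) : Cmod L <= S -> forall x, Cmod (Cminus (f x) L) <= A x.
Proof.
  intros HL x. unfold A, Cminus. eapply Rle_trans; [apply Cmod_triangle|]. rewrite Cmod_opp. lra.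
Qed.

Lemma A_weighted_tails_vanish : tails_vanish (fun x => A x * poly_weight P x).
Proof.
  apply (weighted_tails_vanish A (C0 + 2 * S) (N + 1)).
  - apply A_nonneg.
  - apply A_ex_RInt.
  - apply A_growth.
  - apply A_weighted_ex_RInt.
Qed.

Lemma mollified_integrable (k : nat) : exists l,
  is_RInt_gen (fun x => Cmult (f x) (phi_kc phi k c x))
    (Rbar_locally m_infty) (Rbar_locally p_infty) l.
Proof.
  destruct (Schwartz_decay phi P phi_Schwartz) as [Q [HQ Hdecay]].
  set (lam := INR k * Q * (2 * (1 + c ^ 2)) ^ P).
  assert (Hlam : 0 <= lam).
  { unfold lam. pose proof (pos_INR k). pose proof (pow2_ge_0 c).
    apply Rmult_le_pos; [nra|apply pow_le; lra]. }
  apply (ex_RInt_gen_dominated _ (fun x => lam * (A x * poly_weight P x))).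
  - apply f_phi_kc_ex_RInt.
  - intros a b. apply (ex_RInt_scal (V:=R_NormedModule)), A_weighted_ex_RInt.
  - intros x. rewrite Cmod_mult.
    replace (lam * (A x * poly_weight P x)) with (A x * (lam * poly_weight P x)) by ring.
    apply Rmult_le_compat; try apply Cmod_ge_0.
    + pose proof S_nonneg. unfold A. lra.
    + apply phi_kc_bound; assumption.
  - apply tails_vanish_scal; [exact Hlam|apply A_weighted_ex_RInt|apply A_weighted_tails_vanish].
Qed.

Lemma A_weighted_RInt_le u v : u <= v -> RInt (fun x => A x * poly_weight P x) u v <= Ktot.
Proof.
  apply (RInt_weighted_le A (C0 + 2 * S) (N + 1)).
  - apply A_nonneg.
  - apply A_ex_RInt.
  - apply A_growth.
  - apply A_weighted_ex_RInt.
Qed.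

Lemma one_sided_limits_near (e1 : R) : 0 < e1 -> exists delta, 0 < delta /\
  (forall x, c < x -> Rabs (x - c) < delta -> Cmod (Cminus (f x) Lp) <= e1) /\
  (forall x, x < c -> Rabs (x - c) < delta -> Cmod (Cminus (f x) Lm) <= e1).
Proof.
  intros He1.
  destruct (filterlim_Cmod_lt _ _ _ f_right (mkposreal e1 He1)) as [d1 Hd1].
  destruct (filterlim_Cmod_lt _ _ _ f_left (mkposreal e1 He1)) as [d2 Hd2].
  exists (Rmin d1 d2). split; [apply Rmin_glb_lt; apply cond_pos|]. split.
  - intros x Hx Hxc. apply Rlt_le, Hd1; [|exact Hx].
    apply Rlt_le_trans with (Rmin d1 d2); [exact Hxc|apply Rmin_l].
  - intros x Hx Hxc. apply Rlt_le, Hd2; [|exact Hx].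
    apply Rlt_le_trans with (Rmin d1 d2); [exact Hxc|apply Rmin_r].
Qed.

Section ErrorBound.

Variables (Q Q1 e1 delta : R).
Hypothesis Q_nonneg : 0 <= Q.
Hypothesis Q1_nonneg : 0 <= Q1.
Hypothesis phi_decay : forall y, Cmod (phi y) <= Q * poly_weight P y.
Hypothesis phi_decay1 : forall y, Cmod (phi y) <= Q1 * poly_weight 1 y.
Hypothesis e1_nonneg : 0 <= e1.
Hypothesis delta_pos : 0 < delta.

Let far := Q * (2 * (1 + c ^ 2) * (1 + / delta ^ 2)) ^ P.

Lemma far_nonneg : 0 <= far.
Proof.
  apply Rmult_le_pos; [exact Q_nonneg|apply pow_le].
  pose proof (pow2_ge_0 c). pose proof (Rinv_0_lt_compat _ (pow_lt _ 2 delta_pos)). nra.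
Qed.

Lemma error_integrand_le (L : C) (k : nat) (x : R) : 1 <= INR k -> Cmod L <= S ->
  (Rabs (x - c) < delta -> Cmod (Cminus (f x) L) <= e1) ->
  Cmod (Cmult (Cminus (f x) L) (phi_kc phi k c x))
    <= e1 * Q1 * lorentz_kc (INR k) c x + far / INR k * (A x * poly_weight P x).
Proof.
  intros Hk HL Hnear. rewrite Cmod_mult.
  pose proof (Cmod_ge_0 (phi_kc phi k c x)). pose proof (Cmod_ge_0 (Cminus (f x) L)).
  assert (Hlor : 0 <= lorentz_kc (INR k) c x).
  { unfold lorentz_kc. pose proof (poly_weight_pos 1 (INR k * (x - c))).
    pose proof (pos_INR k). nra. }
  assert (Hw : 0 <= far / INR k * (A x * poly_weight P x)).
  { pose proof far_nonneg. pose proof (A_nonneg x). pose proof (poly_weight_pos P x).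
    apply Rmult_le_pos; [apply Rdiv_le_0_compat; lra|nra]. }
  pose proof (Rmult_le_pos _ _ e1_nonneg Q1_nonneg).
  destruct (Rlt_or_le (Rabs (x - c)) delta) as [Hxc|Hxc].
  - assert (Hphi : Cmod (phi_kc phi k c x) <= Q1 * lorentz_kc (INR k) c x).
    { rewrite Cmod_phi_kc. unfold lorentz_kc. pose proof (pos_INR k).
      specialize (phi_decay1 (INR k * (x - c))). nra. }
    pose proof (Hnear Hxc). nra.
  - assert (Hphi := phi_kc_far_bound phi Q P Q_nonneg phi_decay k c delta x
                      delta_pos ltac:(unfold P; lia) Hk Hxc).
    fold far in Hphi. pose proof (Cmod_f_sub_le_A L HL x). nra.
Qed.

Lemma Cmod_RInt_error_le (L : C) (k : nat) (u v : R) :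
  u <= v -> 1 <= INR k -> Cmod L <= S ->
  (forall x, u < x < v -> Rabs (x - c) < delta -> Cmod (Cminus (f x) L) <= e1) ->
  Cmod (RIntC (fun x => Cmult (Cminus (f x) L) (phi_kc phi k c x)) u v)
    <= e1 * (Q1 * PI) + far / INR k * Ktot.
Proof.
  intros Huv Hk HL Hnear.
  assert (Hlor : forall a b, ex_RInt (lorentz_kc (INR k) c) a b)
    by (intros a b; eexists; apply is_RInt_lorentz_kc).
  apply Rle_trans with
    (RInt (fun x => e1 * Q1 * lorentz_kc (INR k) c x + far / INR k * (A x * poly_weight P x)) u v).
  - apply Cmod_RInt_le; [exact Huv| | |].
    + eexists. apply is_RInt_Cmult_sub; [apply f_phi_kc_ex_RInt|apply phi_kc_ex_RInt].
    + apply (ex_RInt_plus (V:=R_NormedModule)); apply (ex_RInt_scal (V:=R_NormedModule));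
        auto using A_weighted_ex_RInt.
    + intros x Hx. apply error_integrand_le; auto.
  - rewrite (RInt_plus (V:=R_CompleteNormedModule));
      [|apply (ex_RInt_scal (V:=R_NormedModule)); auto
       |apply (ex_RInt_scal (V:=R_NormedModule)), A_weighted_ex_RInt].
    change (plus ?x ?y) with (x + y).
    rewrite !RInt_scal_R by auto using A_weighted_ex_RInt.
    pose proof (RInt_lorentz_kc_le (INR k) c u v). pose proof (A_weighted_RInt_le u v Huv).
    pose proof (Rmult_le_pos _ _ e1_nonneg Q1_nonneg).
    pose proof (Rdiv_le_0_compat far (INR k) far_nonneg ltac:(lra)). nra.
Qed.

End ErrorBound.

Lemma Ktot_nonneg : 0 <= Ktot.
Proof. assert (H := A_weighted_RInt_le 0 0 (Rle_refl 0)). rewrite RInt_point in H. exact H. Qed.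

Lemma one_sided_errors_small (eps : R) : 0 < eps -> exists K0 : nat, forall k, (K0 <= k)%nat ->
  (0 < k)%nat /\
  (forall b, c <= b ->
     Cmod (RIntC (fun x => Cmult (Cminus (f x) Lp) (phi_kc phi k c x)) c b) <= eps) /\
  (forall a, a <= c ->
     Cmod (RIntC (fun x => Cmult (Cminus (f x) Lm) (phi_kc phi k c x)) a c) <= eps).
Proof.
  intros He.
  destruct (Schwartz_decay phi P phi_Schwartz) as [Q [HQ HdQ]].
  destruct (Schwartz_decay phi 1 phi_Schwartz) as [Q1 [HQ1 HdQ1]].
  pose proof PI_RGT_0.
  set (e1 := eps / 2 / (Q1 * PI + 1)).
  assert (He1 : 0 < e1) by (apply Rdiv_lt_0_compat; nra).
  assert (Hnear : e1 * (Q1 * PI) <= eps / 2).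
  { unfold e1. apply Rmult_le_reg_r with (Q1 * PI + 1); [nra|].
    replace (eps / 2 / (Q1 * PI + 1) * (Q1 * PI) * (Q1 * PI + 1)) with (eps / 2 * (Q1 * PI))
      by (field; nra). nra. }
  destruct (one_sided_limits_near e1 He1) as [delta [Hdelta [Hright Hleft]]].
  set (far := Q * (2 * (1 + c ^ 2) * (1 + / delta ^ 2)) ^ P).
  assert (Hfar0 : 0 <= far * Ktot)
    by (apply Rmult_le_pos; [apply (far_nonneg Q delta HQ Hdelta)|apply Ktot_nonneg]).
  destruct (eventually_div_INR_le (far * Ktot) (eps / 2) Hfar0 ltac:(lra)) as [K0 HK0].
  exists K0. intros k Hk. destruct (HK0 k Hk) as [Hk1 Hfar].
  replace (far * Ktot / INR k) with (far / INR k * Ktot) in Hfar by (field; lra).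
  split; [apply INR_lt; simpl; lra|].
  pose proof (Cmod_ge_0 Lp). pose proof (Cmod_ge_0 Lm).
  split; [intros b Hb|intros a Ha];
    (eapply Rle_trans;
       [apply (Cmod_RInt_error_le Q Q1 e1 delta); auto; unfold S; try lra|fold far; lra]).
  - intros x Hx. apply Hright. lra.
  - intros x Hx. apply Hleft. lra.
Qed.

Lemma mollified_converges :
  filterlim (fun k => RInt_gen (V:=C_R_CompleteNormedModule)
                        (fun x => Cmult (f x) (phi_kc phi k c x))
                        (Rbar_locally m_infty) (Rbar_locally p_infty))
    eventually (locally (Cmult (Cplus Lp Lm) (RtoC (/ 2)))).
Proof.
  apply (filterlim_of_Cmod_lt eventually). intros [e He]. simpl.
  destruct (one_sided_errors_small (e / 4)) as [K0 HK0]; [lra|].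
  exists K0. intros k Hk. destruct (HK0 k Hk) as [Hk0 [Hright Hleft]].
  pose proof S_nonneg as HS.
  set (eta := e / (8 * (S + 1))).
  assert (Heta : 0 < eta) by (apply Rdiv_lt_0_compat; lra).
  assert (HSeta : S * eta <= e / 8).
  { unfold eta. apply Rmult_le_reg_r with (8 * (S + 1)); [lra|].
    replace (S * (e / (8 * (S + 1))) * (8 * (S + 1))) with (S * e) by (field; lra). nra. }
  destruct (filterlim_Cmod_lt _ _ _
              (phi_kc_half_mass_right phi phi_even phi_ex_RInt phi_mass k c Hk0)
              (mkposreal eta Heta)) as [b0 Hb0].
  destruct (filterlim_Cmod_lt _ _ _
              (phi_kc_half_mass_left phi phi_even phi_ex_RInt phi_mass k c Hk0)
              (mkposreal eta Heta)) as [a0 Ha0].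
  simpl in Ha0, Hb0.
  apply Rle_lt_trans with (e / 4 + e / 4 + S * eta); [|lra].
  apply (Cmod_RInt_gen_sub_le (fun x => Cmult (f x) (phi_kc phi k c x))).
  { apply (RInt_gen_correct (V:=C_R_CompleteNormedModule)), mollified_integrable. }
  exists (Rmin (a0 - 1) c), (Rmax (b0 + 1) c). intros a b Ha Hb.
  pose proof (Rmin_l (a0 - 1) c). pose proof (Rmin_r (a0 - 1) c).
  pose proof (Rmax_l (b0 + 1) c). pose proof (Rmax_r (b0 + 1) c).
  eapply Rle_trans; [apply (Cmod_RInt_split_at _ _ _ _ a c b);
                     [apply f_phi_kc_ex_RInt|apply phi_kc_ex_RInt]|].
  assert (El := Hleft a ltac:(lra)). assert (Er := Hright b ltac:(lra)).
  assert (Ml := Ha0 a ltac:(lra)). assert (Mr := Hb0 b ltac:(lra)).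
  pose proof (Cmod_ge_0 Lp). pose proof (Cmod_ge_0 Lm). unfold S in *. nra.
Qed.

End Mollification.

Theorem theorem6p1 (phi : R -> C) :
  Schwartz phi ->
  (forall x : R, phi (- x) = phi x) ->
  is_RInt_gen phi (Rbar_locally m_infty) (Rbar_locally p_infty) (RtoC 1) ->
  forall (f : R -> C) (c : R), SG f ->
    exists I : nat -> C,
      (forall k : nat,
         is_RInt_gen (fun x => Cmult (f x) (phi_kc phi k c x))
           (Rbar_locally m_infty) (Rbar_locally p_infty) (I k)) /\
      filterlim I eventually (locally (f c)).
Proof.
  intros HS Hev Hmass f c [Hf [C0 [N [_ Hgrowth]]]].
  assert (Hpw := PC_bj_pw_continuous f Hf).
  destruct Hf as [_ Hmid]. destruct (Hmid c) as [Lp [Lm [Hright [Hleft ->]]]].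
  exists (fun k => RInt_gen (V:=C_R_CompleteNormedModule) (fun x => Cmult (f x) (phi_kc phi k c x))
                     (Rbar_locally m_infty) (Rbar_locally p_infty)).
  split.
  - intros k. apply (RInt_gen_correct (V:=C_R_CompleteNormedModule)).
    apply (mollified_integrable phi f c C0 N Lp Lm); assumption.
  - apply (mollified_converges phi f c C0 N Lp Lm); assumption.
Qed.
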